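(* Let $L$ be a C-loop with nucleus $N$. Then the factor loop $L/N$ is a Steiner loop.
   Context: A C-loop is a loop satisfying $x(y(yz))=((xy)y)z$ for all $x,y,z$. The nucleus $N$ of a loop is the set of elements $a$ with $a(yz)=(ay)z$, $y(az)=(ya)z$, $y(za)=(yz)a$ for all $y,z$; in a C-loop it is a normal subloop (normal meaning $xN=Nx$, $x(yN)=(xy)N$, $x(Ny)=(xN)y$ for all $x,y$), and $L/N$ is the factor loop of cosets. A Steiner loop is a loop with neutral element $e$ satisfying $xx=e$, $(yx)x=y$, $xy=yx$ for all $x,y$. *)

From Stdlib Require Import ClassicalEpsilon.

Set Implicit Arguments.

Section Loops.
Variable T : Type.
Variable mul : T -> T -> T.
Local Infix "*" := mul.

Definition is_loop (e : T) : Prop :=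
  (forall x, e * x = x /\ x * e = x) /\
  (forall a b, exists! x, a * x = b) /\
  (forall a b, exists! y, y * a = b).

Definition C_law : Prop :=
  forall x y z, x * (y * (y * z)) = ((x * y) * y) * z.

Definition is_C_loop (e : T) : Prop := is_loop e /\ C_law.

Definition is_steiner_loop (e : T) : Prop :=
  is_loop e /\
  (forall x, x * x = e) /\
  (forall x y, (y * x) * x = y) /\
  (forall x y, x * y = y * x).

Definition nucleus (a : T) : Prop :=
  forall y z,
    a * (y * z) = (a * y) * z /\
    y * (a * z) = (y * a) * z /\
    y * (z * a) = (y * z) * a.

Definition ncoset (x : T) : T -> Prop :=
  fun z => exists n, nucleus n /\ z = x * n.

End Loops.

(* The factor loop L/N: its elements are the cosets xN (as subsets of T),
   with multiplication (xN)(yN) = (xy)N and neutral element eN = N. *)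
Record factor (T : Type) (mul : T -> T -> T) : Type := Factor {
  fset : T -> Prop;
  fset_coset : exists x, fset = ncoset mul x
}.

Definition frep T (mul : T -> T -> T) (c : factor mul) : T :=
  proj1_sig (constructive_indefinite_description _ (fset_coset c)).

Definition fcoset T (mul : T -> T -> T) (x : T) : factor mul :=
  @Factor T mul (ncoset mul x) (ex_intro _ x eq_refl).

Definition fmul T (mul : T -> T -> T) (c d : factor mul) : factor mul :=
  fcoset mul (mul (frep c) (frep d)).

Definition fone T (mul : T -> T -> T) (e : T) : factor mul := fcoset mul e.

(* A C-loop is a loop with the inverse properties in which every square y y
   lies in the nucleus N: the C-law says that y y is middle-nuclear, and in an
   inverse-property loop the middle nucleus is the whole nucleus. Squares then
   make N normal, so L/N is a loop with (xN)(yN) = (xy)N in which every square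
   is trivial; this gives x x = 1 and (y x) x = y, and commutativity follows
   because x y and y x are both congruent to (x y)^-1 = y^-1 x^-1 modulo
   products of squares. *)
From Stdlib Require Import ClassicalEpsilon FunctionalExtensionality
  PropExtensionality ProofIrrelevance.

Set Implicit Arguments.

Section LoopCancellation.
Variables (T : Type) (mul : T -> T -> T) (e : T).
Local Infix "*" := mul.
Hypothesis hloop : is_loop mul e.

Lemma mul_e_l x : e * x = x.
Proof. exact (proj1 (proj1 hloop x)). Qed.

Lemma mul_e_r x : x * e = x.
Proof. exact (proj2 (proj1 hloop x)). Qed.

Lemma mul_cancel_l a x y : a * x = a * y -> x = y.
Proof.
  intro H. destruct (proj1 (proj2 hloop) a (a * y)) as [z [_ Hz]].
  now rewrite <- (Hz x H), <- (Hz y eq_refl).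
Qed.

Lemma mul_cancel_r a x y : x * a = y * a -> x = y.
Proof.
  intro H. destruct (proj2 (proj2 hloop) a (y * a)) as [z [_ Hz]].
  now rewrite <- (Hz x H), <- (Hz y eq_refl).
Qed.

End LoopCancellation.

Section NucleusMagma.
Variables (T : Type) (mul : T -> T -> T).
Local Infix "*" := mul.
Let N := nucleus mul.

Lemma nucleus_assoc_l a y z : N a -> a * (y * z) = (a * y) * z.
Proof. intro Ha. exact (proj1 (Ha y z)). Qed.

Lemma nucleus_assoc_m a y z : N a -> y * (a * z) = (y * a) * z.
Proof. intro Ha. exact (proj1 (proj2 (Ha y z))). Qed.

Lemma nucleus_assoc_r a y z : N a -> y * (z * a) = (y * z) * a.
Proof. intro Ha. exact (proj2 (proj2 (Ha y z))). Qed.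

Lemma nucleus_mul a b : N a -> N b -> N (a * b).
Proof.
  intros Ha Hb y z. split; [|split].
  - rewrite <- (nucleus_assoc_l _ _ Ha), (nucleus_assoc_l _ _ Hb),
      (nucleus_assoc_l _ _ Ha), (nucleus_assoc_l _ _ Ha).
    reflexivity.
  - rewrite <- (nucleus_assoc_l _ _ Ha), (nucleus_assoc_m _ _ Ha),
      (nucleus_assoc_m _ _ Hb), (nucleus_assoc_r _ _ Hb).
    reflexivity.
  - rewrite (nucleus_assoc_r _ _ Hb), (nucleus_assoc_r _ _ Hb),
      (nucleus_assoc_r _ _ Ha), <- (nucleus_assoc_r _ _ Hb).
    reflexivity.
Qed.

Lemma nucleus_e e : is_loop mul e -> N e.
Proof.
  intros hloop y z. rewrite !(mul_e_l hloop), !(mul_e_r hloop). auto.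
Qed.

Lemma factor_ext (c d : factor mul) : fset c = fset d -> c = d.
Proof.
  destruct c as [f p], d as [g q]. simpl. intros <-. f_equal. apply proof_irrelevance.
Qed.

Lemma fcoset_frep (c : factor mul) : fcoset mul (frep c) = c.
Proof.
  apply factor_ext. unfold frep, fcoset. simpl.
  destruct (constructive_indefinite_description _ _) as [x Hx]. now rewrite Hx.
Qed.

Lemma factor_fcoset_surj (c : factor mul) : exists x, c = fcoset mul x.
Proof. exists (frep c). symmetry. apply fcoset_frep. Qed.

End NucleusMagma.

Section CLoop.
Variables (T : Type) (mul : T -> T -> T) (e : T).
Local Infix "*" := mul.
Hypothesis hC : is_C_loop mul e.
Let hloop : is_loop mul e := proj1 hC.
Let N := nucleus mul.

Lemma C_law_loop x y z : x * (y * (y * z)) = ((x * y) * y) * z.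
Proof. exact (proj2 hC x y z). Qed.

Lemma left_alternative y z : y * (y * z) = (y * y) * z.
Proof.
  rewrite <- (mul_e_l hloop (y * (y * z))), C_law_loop, (mul_e_l hloop).
  reflexivity.
Qed.

Lemma right_alternative x y : x * (y * y) = (x * y) * y.
Proof.
  pose proof (C_law_loop x y e) as H. rewrite !(mul_e_r hloop) in H. exact H.
Qed.

Definition inv (a : T) : T :=
  proj1_sig (constructive_indefinite_description _ (proj1 (proj2 hloop) a e)).

Lemma mul_inv_r a : a * inv a = e.
Proof.
  unfold inv. destruct (constructive_indefinite_description _ _) as [x Hx].
  exact (proj1 Hx).
Qed.

Lemma right_inverse_property w y : (w * y) * inv y = w.
Proof.
  destruct (proj2 (proj2 hloop) y w) as [x [<- _]].
  pose proof (C_law_loop x y (inv y)) as H.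
  rewrite mul_inv_r, (mul_e_r hloop) in H. auto.
Qed.

Lemma mul_inv_l y : inv y * y = e.
Proof.
  destruct (proj2 (proj2 hloop) y e) as [l [Hl _]].
  assert (Hlip : forall u, l * (y * u) = u).
  { intro u. destruct (proj1 (proj2 hloop) y u) as [z [<- _]].
    rewrite C_law_loop, Hl, (mul_e_l hloop). reflexivity. }
  pose proof (Hlip (inv y)) as H. rewrite mul_inv_r, (mul_e_r hloop) in H.
  now rewrite <- H.
Qed.

Lemma left_inverse_property y u : inv y * (y * u) = u.
Proof.
  destruct (proj1 (proj2 hloop) y u) as [z [<- _]].
  rewrite C_law_loop, mul_inv_l, (mul_e_l hloop). reflexivity.
Qed.

Lemma inv_involutive y : inv (inv y) = y.
Proof.
  apply (mul_cancel_l hloop (inv y)). rewrite mul_inv_r, mul_inv_l. reflexivity.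
Qed.

Lemma left_inverse_property' y u : y * (inv y * u) = u.
Proof. rewrite <- (inv_involutive y) at 1. apply left_inverse_property. Qed.

Lemma right_inverse_property' w y : (w * inv y) * y = w.
Proof. rewrite <- (inv_involutive y) at 2. apply right_inverse_property. Qed.

Lemma inv_mul x y : inv (x * y) = inv y * inv x.
Proof.
  assert (H : inv (x * y) * x = inv y).
  { rewrite <- (right_inverse_property x y) at 2. apply left_inverse_property. }
  rewrite <- H, right_inverse_property. reflexivity.
Qed.

Lemma inv_eq_mul_sq_l y : inv y = y * (inv y * inv y).
Proof. rewrite right_alternative, mul_inv_r, (mul_e_l hloop). reflexivity. Qed.

Lemma inv_eq_mul_sq_r y : inv y = (inv y * inv y) * y.
Proof. rewrite <- left_alternative, mul_inv_l, (mul_e_r hloop). reflexivity. Qed.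

Lemma middle_nucleus_nucleus a :
  (forall x z, x * (a * z) = (x * a) * z) -> N a.
Proof.
  intro Hm.
  assert (Hdiv : forall x z, a * z = inv x * ((x * a) * z)).
  { intros x z. rewrite <- Hm, left_inverse_property. reflexivity. }
  intros y z. split; [|split].
  - rewrite (Hdiv (inv y * inv a) (y * z)), right_inverse_property', inv_mul,
      !inv_involutive, left_inverse_property.
    reflexivity.
  - apply Hm.
  - assert (Hshift : forall x w, (x * w) * (inv w * a) = x * a).
    { intros x w. rewrite <- (right_inverse_property (x * a) (inv a * w)),
        <- Hm, left_inverse_property', inv_mul, inv_involutive.
      reflexivity. }
    pose proof (Hshift (y * z) (inv z)) as H.
    rewrite right_inverse_property, inv_involutive in H. exact H.
Qed.

Lemma nucleus_sq y : N (y * y).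
Proof.
  apply middle_nucleus_nucleus. intros x z.
  rewrite <- left_alternative, C_law_loop, right_alternative. reflexivity.
Qed.

Lemma nucleus_inv a : N a -> N (inv a).
Proof.
  intro Ha. rewrite inv_eq_mul_sq_l. apply nucleus_mul; [exact Ha | apply nucleus_sq].
Qed.

Lemma nucleus_conj n x : N n -> N ((x * n) * x).
Proof.
  intro Hn.
  (* ((x n) x) n = (x n)(x n), a square *)
  replace ((x * n) * x) with (((x * n) * (x * n)) * inv n).
  - apply nucleus_mul; [apply nucleus_sq | now apply nucleus_inv].
  - apply (mul_cancel_r hloop n).
    rewrite <- (nucleus_assoc_r _ _ Hn), mul_inv_l, (mul_e_r hloop),
      (nucleus_assoc_r _ _ Hn).
    reflexivity.
Qed.

Lemma nucleus_shift_r n x : N n -> exists n', N n' /\ n * x = x * n'.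
Proof.
  intro Hn. pose proof (nucleus_conj x Hn) as Hc.
  exists ((inv x * inv x) * ((x * n) * x)). split.
  - apply nucleus_mul; [apply nucleus_sq | exact Hc].
  - rewrite <- (left_inverse_property x (n * x)), (nucleus_assoc_m _ _ Hn),
      (nucleus_assoc_r _ _ Hc), <- inv_eq_mul_sq_l.
    reflexivity.
Qed.

Lemma nucleus_shift_l n x : N n -> exists n', N n' /\ x * n = n' * x.
Proof.
  intro Hn. pose proof (nucleus_conj x Hn) as Hc. set (c := (x * n) * x) in Hc.
  exists (c * (inv x * inv x)). split.
  - apply nucleus_mul; [exact Hc | apply nucleus_sq].
  - rewrite <- (right_inverse_property (x * n) x). fold c.
    rewrite <- (nucleus_assoc_l _ _ Hc),
      <- inv_eq_mul_sq_r.
    reflexivity.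
Qed.

Lemma mul_comm_mod_nucleus x y : exists n, N n /\ y * x = (x * y) * n.
Proof.
  set (a := inv y * inv y). set (b := inv x * inv x).
  set (t := inv (x * y) * inv (x * y)).
  assert (Ha : N a) by apply nucleus_sq.
  assert (Hb : N b) by apply nucleus_sq.
  assert (Ht : N t) by apply nucleus_sq.
  destruct (nucleus_shift_r x Ha) as [a' [Ha' Ea]].
  assert (Hab : N (a' * b)) by now apply nucleus_mul.
  (* both sides equal inv (x y) = inv y * inv x = (y a)(x b) *)
  assert (E : (x * y) * t = (y * x) * (a' * b)).
  { unfold t. rewrite <- inv_eq_mul_sq_l, inv_mul, inv_eq_mul_sq_l,
      (inv_eq_mul_sq_l x). fold a b.
    rewrite (nucleus_assoc_r _ _ Hb), <- (nucleus_assoc_m _ _ Ha), Ea,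
      (nucleus_assoc_r _ _ Ha'), (nucleus_assoc_r _ _ Hb).
    reflexivity. }
  exists (t * inv (a' * b)). split.
  - apply nucleus_mul; [exact Ht | now apply nucleus_inv].
  - rewrite (nucleus_assoc_r _ _ (nucleus_inv Hab)), E, right_inverse_property.
    reflexivity.
Qed.

Lemma ncoset_sub x y n : N n -> x = y * n -> forall z, ncoset mul x z -> ncoset mul y z.
Proof.
  intros Hn -> z [m [Hm ->]]. exists (n * m). split.
  - now apply nucleus_mul.
  - symmetry. now apply nucleus_assoc_r.
Qed.

Lemma fcoset_eq_iff x y : fcoset mul x = fcoset mul y <-> exists n, N n /\ x = y * n.
Proof.
  split.
  - intro E. assert (Hx : ncoset mul x x).
    { exists e. split; [exact (nucleus_e hloop) | now rewrite (mul_e_r hloop)]. }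
    change (fset (fcoset mul x) x) in Hx. now rewrite E in Hx.
  - intros [n [Hn Exy]].
    assert (Eyx : y = x * inv n) by now rewrite Exy, right_inverse_property.
    apply factor_ext, functional_extensionality. intro z.
    apply propositional_extensionality.
    split; [apply (ncoset_sub Hn Exy) | apply (ncoset_sub (nucleus_inv Hn) Eyx)].
Qed.

Lemma fcoset_mul_congr x x' y y' :
  fcoset mul x = fcoset mul x' -> fcoset mul y = fcoset mul y' ->
  fcoset mul (x * y) = fcoset mul (x' * y').
Proof.
  rewrite !fcoset_eq_iff. intros [n [Hn ->]] [m [Hm ->]].
  destruct (nucleus_shift_r y' Hn) as [n' [Hn' En]].
  exists (n' * m). split; [now apply nucleus_mul |].
  rewrite (nucleus_assoc_r _ _ Hm), <- (nucleus_assoc_m _ _ Hn), En,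
    (nucleus_assoc_r _ _ Hn'), (nucleus_assoc_r _ _ Hm).
  reflexivity.
Qed.

Lemma fmul_fcoset x y : fmul (fcoset mul x) (fcoset mul y) = fcoset mul (x * y).
Proof. apply fcoset_mul_congr; apply fcoset_frep. Qed.

Lemma fcoset_cancel_l a x y :
  fcoset mul (a * x) = fcoset mul (a * y) -> fcoset mul x = fcoset mul y.
Proof.
  rewrite !fcoset_eq_iff. intros [n [Hn En]]. exists n. split; [exact Hn |].
  rewrite <- (nucleus_assoc_r _ _ Hn) in En. exact (mul_cancel_l hloop a x (y * n) En).
Qed.

Lemma fcoset_cancel_r a x y :
  fcoset mul (x * a) = fcoset mul (y * a) -> fcoset mul x = fcoset mul y.
Proof.
  rewrite !fcoset_eq_iff. intros [n [Hn En]].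
  destruct (nucleus_shift_l a Hn) as [n' [Hn' E']].
  exists n'. split; [exact Hn' |].
  rewrite <- (nucleus_assoc_r _ _ Hn), E', (nucleus_assoc_m _ _ Hn') in En.
  exact (mul_cancel_r hloop a x (y * n') En).
Qed.

Lemma factor_is_loop : is_loop (@fmul T mul) (fone mul e).
Proof.
  unfold fone. split; [| split].
  - intro c. destruct (factor_fcoset_surj c) as [x ->].
    rewrite !fmul_fcoset, (mul_e_l hloop), (mul_e_r hloop). auto.
  - intros a b.
    destruct (factor_fcoset_surj a) as [a0 ->], (factor_fcoset_surj b) as [b0 ->].
    destruct (proj1 (proj2 hloop) a0 b0) as [x0 [Hx _]].
    exists (fcoset mul x0). split; [now rewrite fmul_fcoset, Hx |].
    intros c Hc. destruct (factor_fcoset_surj c) as [c0 ->].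
    rewrite fmul_fcoset, <- Hx in Hc. symmetry. exact (fcoset_cancel_l Hc).
  - intros a b.
    destruct (factor_fcoset_surj a) as [a0 ->], (factor_fcoset_surj b) as [b0 ->].
    destruct (proj2 (proj2 hloop) a0 b0) as [x0 [Hx _]].
    exists (fcoset mul x0). split; [now rewrite fmul_fcoset, Hx |].
    intros c Hc. destruct (factor_fcoset_surj c) as [c0 ->].
    rewrite fmul_fcoset, <- Hx in Hc. symmetry. exact (fcoset_cancel_r Hc).
Qed.

Lemma factor_mul_sq (c : factor mul) : fmul c c = fone mul e.
Proof.
  destruct (factor_fcoset_surj c) as [x ->]. rewrite fmul_fcoset.
  apply fcoset_eq_iff. exists (x * x). split; [apply nucleus_sq |].
  now rewrite (mul_e_l hloop).
Qed.

Lemma factor_mulK (c d : factor mul) : fmul (fmul d c) c = d.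
Proof.
  destruct (factor_fcoset_surj c) as [x ->], (factor_fcoset_surj d) as [y ->].
  rewrite !fmul_fcoset. apply fcoset_eq_iff. exists (x * x).
  split; [apply nucleus_sq | symmetry; apply right_alternative].
Qed.

Lemma factor_mulC (c d : factor mul) : fmul c d = fmul d c.
Proof.
  destruct (factor_fcoset_surj c) as [x ->], (factor_fcoset_surj d) as [y ->].
  rewrite !fmul_fcoset. apply fcoset_eq_iff. apply mul_comm_mod_nucleus.
Qed.

End CLoop.

Theorem proposition2p6 (T : Type) (mul : T -> T -> T) (e : T)
  (hL : is_C_loop mul e) :
  is_steiner_loop (@fmul T mul) (fone mul e).
Proof.
  split; [exact (factor_is_loop hL) | split; [| split]].
  - exact (factor_mul_sq hL).
  - exact (factor_mulK hL).
  - exact (factor_mulC hL).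
Qed.
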